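(* Let $O=(Y,D,Z)$ be a random vector with outcome $Y\in\mathbb{R}$, exposure $D\in\mathbb{R}$, and candidate instruments $Z=(Z_1,\dots,Z_p)\in\{0,1\}^p$ (a row vector), $p\ge 2$, with $\mu^*=(\mu_1^*,\dots,\mu_p^* )=\mathbb{E}(Z)$. Suppose the following hold. (ALICE model) There are potential outcomes $Y(d,z)$ for $d\in\mathcal D$, $z\in\{0,1\}^p$, with $Y=Y(D,Z)$, and parameters $\beta^*\in\mathbb{R}$, $\zeta^*,\psi^*\in\mathbb{R}^p$ such that for all $d,d'\in\mathcal D$ and $z,z'\in\{0,1\}^p$, $$Y(d',z')-Y(d,z)=(d'-d)\beta^*+(z'-z)\zeta^*,\qquad \mathbb{E}\{Y(0,0)\mid Z\}=Z\psi^*.$$ (Independent instruments) $Z_1,\dots,Z_p$ are mutually independent. (Interaction relevance) For a fixed integer $q$ with $2\le q\le p$, the $r$-dimensional vector $$M=-\mathbb{E}\{(\bar Z_{2,\mu^*}^\top,\dots,\bar Z_{q,\mu^*}^\top)^\top D\}$$ is nonzero, where $r=\sum_{k=2}^q\binom{p}{k}$. Define the $r$-dimensional moment function $m(O;\beta,\mu^* )=(\bar Z_{2,\mu^*}^\top,\dots,\bar Z_{q,\mu^*}^\top)^\top (Y-D\beta)$. Then $\beta=\beta^*$ is the unique solution in $\beta\in\mathbb{R}$ of the population moment equation $\mathbb{E}\{m(O;\beta,\mu^* )\}=0$.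
   Context: For $1\le k\le p$ and $\mu\in\mathbb{R}^p$, $\bar Z_{k,\mu}$ denotes the column vector (in a fixed order) of all $\binom{p}{k}$ demeaned $k$-th order interactions $\prod_{j\in x}(Z_j-\mu_j)$, $x$ ranging over the subsets of $\{1,\dots,p\}$ of size $k$. All expectations appearing are assumed to exist and be finite. *)

From HB Require Import structures.
From mathcomp Require Import all_boot all_order all_algebra.
From mathcomp Require Import all_classical all_reals all_analysis.
Set Implicit Arguments. Unset Strict Implicit. Unset Printing Implicit Defensive.
Import Order.TTheory GRing.Theory Num.Theory.
Local Open Scope classical_set_scope.
Local Open Scope ring_scope.

Definition zdot (R : realType) (p : nat) (z : {ffun 'I_p -> bool}) (v : 'I_p -> R) : R :=
  \sum_(j < p) (z j)%:R * v j.

Definition interaction (R : realType) (p : nat) (x : {set 'I_p})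
  (mu : 'I_p -> R) (z : {ffun 'I_p -> bool}) : R :=
  \prod_(j in x) ((z j)%:R - mu j).

(* index set of the stacked vector (Zbar_2^T, ..., Zbar_q^T)^T :
   all subsets x of {1..p} with 2 <= |x| <= q *)
Definition interaction_index (p q : nat) : {set {set 'I_p}} :=
  finset (fun x : {set 'I_p} => (2 <= #|x|)%N && (#|x| <= q)%N).

(* mutual independence of the binary random variables Z_1, ..., Z_p:
   product rule for all events {Z_j in A_j} (taking A_j = setT gives
   every subfamily) *)
Definition mutually_independent d (T : measurableType d) (R : realType)
  (P : probability T R) (p : nat) (Z : T -> {ffun 'I_p -> bool}) : Prop :=
  forall A : 'I_p -> set bool,
    P (\bigcap_(j in [set: 'I_p]) [set w | A j (Z w j)]) =
    (\prod_(j < p) P [set w | A j (Z w j)])%E.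

(* E{ X | Z } = g(Z) for a finitely-valued Z: the defining property of the
   conditional expectation w.r.t. sigma(Z) (generated by the atoms {Z = z}) *)
Definition cond_exp_given_Z_is d (T : measurableType d) (R : realType)
  (P : probability T R) (p : nat) (Z : T -> {ffun 'I_p -> bool})
  (X : T -> R) (g : {ffun 'I_p -> bool} -> R) : Prop :=
  P.-integrable setT (EFin \o X) /\
  forall z : {ffun 'I_p -> bool},
    (\int[P]_w (X w * (Z w == z)%:R)%:E = (g z)%:E * P [set w | Z w = z])%E.

From HB Require Import structures.
From mathcomp Require Import all_boot all_order all_algebra.
From mathcomp Require Import all_classical all_reals all_analysis.
From mathcomp Require Import measurable_realfun ring.
Import Order.TTheory GRing.Theory Num.Theory.

(* Z takes finitely many values and its coordinates are independent Bernoulli(mu_j)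
   variables, so E[f(Z)] = sum_z f(z) prod_j P(Z_j = z_j).  For |x| >= 2 the centred
   interaction prod_(i in x) (Z_i - mu_i) is orthogonal to every linear function of Z:
   in E[prod_(i in x) (Z_i - mu_i) Z_j] a coordinate k in x with k <> j contributes
   the factor E[Z_k - mu_k] = 0.  The ALICE model gives
   Y - D beta = Y(0,0) + Z zeta + (beta^* - beta) D with E[Y(0,0) | Z] = Z psi linear,
   hence E[m(O; beta)] = (beta^* - beta) E[Zbar D], and relevance forces beta = beta^*. *)

Set Implicit Arguments.
Unset Strict Implicit.
Unset Printing Implicit Defensive.
Local Open Scope classical_set_scope.
Local Open Scope ring_scope.

Definition bern_mass (R : pzRingType) (m : R) (b : bool) : R := if b then m else 1 - m.

Lemma sum_bern_mass_centered (R : comPzRingType) (m : R) :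
  \sum_(b : bool) (b%:R - m) * bern_mass m b = 0.
Proof. by rewrite big_bool /=; ring. Qed.

Section InteractionMoments.
Variables (R : realType) (p : nat) (mu : 'I_p -> R).

Local Notation weight z := (\prod_i bern_mass (mu i) (z i)).

Lemma sum_interaction_coord (x : {set 'I_p}) j : (2 <= #|x|)%N ->
  \sum_(z : {ffun 'I_p -> bool}) interaction x mu z * (z j)%:R * weight z = 0.
Proof.
move=> x_ge2.
have [k /setD1P[kj kx]] : exists k, k \in x :\ j.
  apply/set0Pn; rewrite -card_gt0 -ltnS; apply: leq_trans x_ge2 _.
  by rewrite (cardsD1 j x); case: (j \in x).
pose F i (b : bool) := (if i \in x then b%:R - mu i else 1) *
  (if i == j then b%:R else 1) * bern_mass (mu i) b.
transitivity (\sum_(z : {ffun 'I_p -> bool}) \prod_i F i (z i)).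
  apply: eq_bigr => z _; rewrite !big_split /= -[X in _ = _ * X * _]big_mkcond.
  by rewrite big_pred1_eq /interaction big_mkcond.
rewrite -bigA_distr_bigA (bigD1 k) //=.
suff -> : \sum_b F k b = 0 by rewrite mul0r.
rewrite -[RHS](sum_bern_mass_centered (mu k)).
by apply: eq_bigr => b _; rewrite /F kx (negbTE kj) mulr1.
Qed.

Lemma sum_interaction_zdot (x : {set 'I_p}) (c : 'I_p -> R) : (2 <= #|x|)%N ->
  \sum_(z : {ffun 'I_p -> bool}) interaction x mu z * zdot z c * weight z = 0.
Proof.
move=> x_ge2.
transitivity (\sum_(j < p) c j *
  \sum_(z : {ffun 'I_p -> bool}) interaction x mu z * (z j)%:R * weight z).
  under [RHS]eq_bigr do rewrite mulr_sumr.
  rewrite [RHS]exchange_big; apply: eq_bigr => z _ /=.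
  by rewrite /zdot mulr_sumr mulr_suml; apply: eq_bigr => j _; ring.
by rewrite big1 // => j _; rewrite sum_interaction_coord ?mulr0.
Qed.

End InteractionMoments.

Section FiniteValued.
Context d (T : measurableType d) (R : realType) (P : probability T R).
Variables (V : finType) (Z : T -> V).
Hypothesis mZ : forall v, measurable [set w | Z w = v].

Lemma eq_indicE v w : ((Z w == v)%:R : R) = \1_[set w | Z w = v] w.
Proof. by rewrite indicE; case: eqP => Zw; [rewrite mem_set | rewrite memNset]. Qed.

Lemma integrable_mul_eq (X : T -> R) v : P.-integrable setT (EFin \o X) ->
  P.-integrable setT (fun w => (X w * (Z w == v)%:R)%:E).
Proof.
move=> iX; apply: (le_integrable measurableT _ _ iX) => //.
  apply/measurable_EFinP/measurable_funM.
    exact/measurable_EFinP/(measurable_int _ iX).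
  by under eq_fun do rewrite eq_indicE; exact: measurable_indic.
by move=> w _; rewrite lee_fin normrM; case: eqP; rewrite ?normr1 ?normr0 ?mulr1 ?mulr0.
Qed.

Lemma mul_compE (X : T -> R) (g : V -> R) w :
  (X w * g (Z w))%:E = (\sum_v (g v)%:E * (X w * (Z w == v)%:R)%:E)%E.
Proof.
rewrite (bigD1 (Z w)) //= eqxx mulr1 big1 ?adde0 1?muleC //.
by move=> v /negbTE; rewrite eq_sym => ->; rewrite mulr0 mule0.
Qed.

Lemma integral_mul_comp (X : T -> R) (g : V -> R) : P.-integrable setT (EFin \o X) ->
  (\int[P]_w (X w * g (Z w))%:E =
   \sum_v (g v)%:E * \int[P]_w (X w * (Z w == v)%:R)%:E)%E.
Proof.
move=> iX; under eq_integral do rewrite mul_compE.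
rewrite integral_sum //; last by move=> v; apply/integrableZl/integrable_mul_eq.
by apply: eq_bigr => v _; rewrite integralZl //; exact: integrable_mul_eq.
Qed.

Lemma integrable_mul_comp (X : T -> R) (g : V -> R) : P.-integrable setT (EFin \o X) ->
  P.-integrable setT (fun w => (X w * g (Z w))%:E).
Proof.
move=> iX; under eq_fun do rewrite mul_compE.
by apply: integrable_sum => // v _; apply/integrableZl/integrable_mul_eq.
Qed.

Lemma integral_comp (g : V -> R) :
  (\int[P]_w (g (Z w))%:E = \sum_v (g v)%:E * P [set w | Z w = v])%E.
Proof.
under eq_integral do rewrite -[g _]mul1r.
rewrite integral_mul_comp; last exact: finite_measure_integrable_cst.
apply: eq_bigr => v _; congr (_ * _)%E.
by under eq_integral do rewrite mul1r eq_indicE; rewrite integral_indic ?setIT.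
Qed.

End FiniteValued.

Section IndependentBinary.
Context d (T : measurableType d) (R : realType) (P : probability T R).
Variables (p : nat) (Z : T -> {ffun 'I_p -> bool}) (mu : 'I_p -> R).
Hypotheses (mZ : forall j, measurable_fun setT (fun w => ((Z w j)%:R : R)))
  (indepZ : mutually_independent P Z)
  (meanZ : forall j, (\int[P]_w ((Z w j)%:R : R)%:E = (mu j)%:E)%E).

Lemma measurable_coord_eq j b : measurable [set w | Z w j = b].
Proof.
have := mZ j measurableT (measurable_set1 (b%:R : R)); rewrite setTI.
congr measurable; apply/seteqP; split => w /=; last by move->.
by move/eqP; rewrite eqr_nat; case: (Z w j); case: b.
Qed.

Lemma preimage_eq_bigcap z :
  [set w | Z w = z] = \bigcap_(j in [set: 'I_p]) [set w | Z w j = z j].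
Proof.
apply/seteqP; split => w /=; first by move=> Zwz j _ /=; rewrite Zwz.
by move=> Zwz; apply/ffunP => j; exact: Zwz.
Qed.

Lemma measurable_eq z : measurable [set w | Z w = z].
Proof.
rewrite preimage_eq_bigcap.
by apply: fin_bigcap_measurable => // j _; exact: measurable_coord_eq.
Qed.

Lemma prob_coord_true j : P [set w | Z w j = true] = (mu j)%:E.
Proof.
rewrite -meanZ (integral_comp P (measurable_coord_eq j) (fun b : bool => b%:R)).
by rewrite big_bool /= mul1e mul0e adde0.
Qed.

Lemma prob_coord_eq j b : P [set w | Z w j = b] = (bern_mass (mu j) b)%:E.
Proof.
case: b; first exact: prob_coord_true.
have -> : [set w | Z w j = false] = ~` [set w | Z w j = true].
  by apply/seteqP; split => w /=; case: (Z w j).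
by rewrite probability_setC ?prob_coord_true //; exact: measurable_coord_eq.
Qed.

Lemma prob_eq z : P [set w | Z w = z] = (\prod_j bern_mass (mu j) (z j))%:E.
Proof.
rewrite preimage_eq_bigcap (indepZ (fun j b => b = z j)) -prodEFin.
by apply: eq_bigr => j _; exact: prob_coord_eq.
Qed.

Lemma integral_interaction_zdot (x : {set 'I_p}) (c : 'I_p -> R) : (2 <= #|x|)%N ->
  (\int[P]_w (interaction x mu (Z w) * zdot (Z w) c)%:E = 0)%E.
Proof.
move=> x_ge2.
rewrite (integral_comp P measurable_eq (fun z => interaction x mu z * zdot z c)).
under eq_bigr do rewrite prob_eq -EFinM.
by rewrite sumEFin sum_interaction_zdot.
Qed.

Lemma integral_mul_interaction (X : T -> R) (x : {set 'I_p}) (c : 'I_p -> R) :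
  (2 <= #|x|)%N -> cond_exp_given_Z_is P Z X (fun z => zdot z c) ->
  (\int[P]_w (X w * interaction x mu (Z w))%:E = 0)%E.
Proof.
move=> x_ge2 [iX condX]; rewrite (integral_mul_comp measurable_eq _ iX).
under eq_bigr do rewrite condX prob_eq -!EFinM mulrA.
by rewrite sumEFin sum_interaction_zdot.
Qed.

End IndependentBinary.

Lemma interaction_index_ge2 p q (x : {set 'I_p}) :
  x \in interaction_index p q -> (2 <= #|x|)%N.
Proof. by rewrite inE => /andP[]. Qed.

Section AliceModel.
Context d (T : measurableType d) (R : realType) (P : probability T R).
Variables (p : nat) (Y D : T -> R) (Z : T -> {ffun 'I_p -> bool}) (Dset : set R).
Variables (Ypot : R -> {ffun 'I_p -> bool} -> T -> R) (beta_star : R) (zeta psi mu : 'I_p -> R).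
Hypotheses (D0 : 0 \in Dset) (DDset : forall w, D w \in Dset)
  (YE : forall w, Y w = Ypot (D w) (Z w) w)
  (Ypot_diff : forall dd dd' z z' w, dd \in Dset -> dd' \in Dset ->
      Ypot dd' z' w - Ypot dd z w
      = (dd' - dd) * beta_star + \sum_(j < p) ((z' j)%:R - (z j)%:R) * zeta j).

Local Notation Y0 := (Ypot 0 [ffun => false]).

Lemma residualE beta w :
  Y w - D w * beta = Y0 w + zdot (Z w) zeta + (beta_star - beta) * D w.
Proof.
have := Ypot_diff [ffun => false] (Z w) w D0 (DDset w); rewrite -YE subr0.
under eq_bigr do rewrite ffunE subr0; rewrite -/(zdot (Z w) zeta).
by move/(canRL (subrK _)) ->; ring.
Qed.

Hypotheses (mZ : forall j, measurable_fun setT (fun w => ((Z w j)%:R : R)))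
  (indepZ : mutually_independent P Z)
  (meanZ : forall j, (\int[P]_w ((Z w j)%:R : R)%:E = (mu j)%:E)%E)
  (iD : P.-integrable setT (EFin \o D))
  (condY0 : cond_exp_given_Z_is P Z Y0 (fun z => zdot z psi)).

Lemma integral_interaction_residual (x : {set 'I_p}) beta : (2 <= #|x|)%N ->
  (\int[P]_w (interaction x mu (Z w) * (Y w - D w * beta))%:E =
   (beta_star - beta)%:E * \int[P]_w (interaction x mu (Z w) * D w)%:E)%E.
Proof.
move=> x_ge2; have mZe := measurable_eq mZ.
have i1 : P.-integrable setT (EFin \o cst (1 : R)).
  exact: finite_measure_integrable_cst.
pose I z := interaction x mu z; pose Iz z := I z * zdot z zeta.
have iY0I := integrable_mul_comp mZe I condY0.1.
have iIz := integrable_mul_comp mZe Iz i1.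
have iDI := integrableZl measurableT (beta_star - beta) (integrable_mul_comp mZe I iD).
rewrite (eq_integral (fun w => (Y0 w * I (Z w))%:E +
    ((1 * Iz (Z w))%:E + (beta_star - beta)%:E * (D w * I (Z w))%:E)))%E; last first.
  by move=> w _; rewrite residualE -!EFinM -!EFinD /Iz /I; congr EFin; ring.
rewrite integralD //; last exact: integrableD.
rewrite integralD // integralZl //; last exact: integrable_mul_comp.
rewrite (integral_mul_interaction mZ indepZ meanZ x_ge2 condY0) add0e.
under eq_integral do rewrite mul1r.
rewrite integral_interaction_zdot // add0e.
by congr (_ * _)%E; apply: eq_integral => w _; rewrite mulrC.
Qed.

End AliceModel.

Theorem theorem1 (d : measure_display) (T : measurableType d) (R : realType)
  (P : probability T R) (p q : nat)
  (Y D : T -> R) (Z : T -> {ffun 'I_p -> bool})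
  (Dset : set R) (Ypot : R -> {ffun 'I_p -> bool} -> T -> R)
  (beta_star : R) (zeta psi mu : 'I_p -> R) :
  (2 <= p)%N ->
  (* Z_j measurable, mu* = E(Z) *)
  (forall j, measurable_fun setT (fun w => ((Z w j)%:R : R))) ->
  (forall j, (\int[P]_w ((Z w j)%:R : R)%:E = (mu j)%:E)%E) ->
  (* integrability of Y and D *)
  P.-integrable setT (EFin \o Y) ->
  P.-integrable setT (EFin \o D) ->
  (* ALICE model *)
  0 \in Dset ->
  (forall w, D w \in Dset) ->
  (forall w, Y w = Ypot (D w) (Z w) w) ->
  (forall dd dd' z z' w, dd \in Dset -> dd' \in Dset ->
      Ypot dd' z' w - Ypot dd z w
      = (dd' - dd) * beta_star + \sum_(j < p) ((z' j)%:R - (z j)%:R) * zeta j) ->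
  cond_exp_given_Z_is P Z (Ypot 0 [ffun => false]) (fun z => zdot z psi) ->
  (* independent instruments *)
  mutually_independent P Z ->
  (* interaction relevance: M <> 0 *)
  (2 <= q)%N -> (q <= p)%N ->
  (exists2 x, x \in interaction_index p q &
     (- \int[P]_w (interaction x mu (Z w) * D w)%:E)%E <> 0%E) ->
  (* beta* is the unique solution of E m(O; beta, mu* ) = 0 *)
  forall beta : R,
    (forall x, x \in interaction_index p q ->
       (\int[P]_w (interaction x mu (Z w) * (Y w - D w * beta))%:E)%E = 0%E)
    <-> beta = beta_star.
Proof.
move=> _ mZ meanZ _ iD D0 DDset YE Ypot_diff condY0 indepZ _ _ [x0 x0_idx M_neq0] beta.
have moment b x (x_idx : x \in interaction_index p q) :=
  integral_interaction_residual D0 DDset YE Ypot_diff mZ indepZ meanZ iD condY0 b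
    (interaction_index_ge2 x_idx).
split => [moment0 | ->]; last by move=> x x_idx; rewrite (moment _ _ x_idx) subrr mul0e.
move/eqP: (moment0 x0 x0_idx); rewrite (moment _ _ x0_idx) mule_eq0 => /orP[|/eqP M0].
  by rewrite eqe subr_eq0 => /eqP.
by case: M_neq0; rewrite M0 oppe0.
Qed.
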